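(* Let $m\ge2$ be an integer and let $B_m=\mathbb{Z}^m$ with componentwise addition. Define a multiplication by $(n_1,\dots,n_m)(t_1,\dots,t_m)=(w_1,\dots,w_m)$ where, for $1\le i\le m$, \[w_i=n_i+\sum_{k=0}^{i-1}\binom{n_1}{k}t_{i-k}.\] Then $(B_m,+,\cdot)$ is a left brace with $B_m^{(3)}=B_m^{m+1}=\{0\}$ and $B_m^m\neq\{0\}$; $B_m$ is generated as a left brace by $\mathbf{b}=(1,0,\dots,0)$; and for every left brace $A$ with $A^{(3)}=A^{m+1}=\{0\}$ and every $a\in A$ there exists a unique left brace homomorphism $B_m\to A$ mapping $\mathbf{b}$ to $a$, and its image is the subbrace of $A$ generated by $a$.
   Context: A left brace $(A,+,\cdot)$ is a set $A$ with two binary operations such that $(A,+)$ is an abelian group, $(A,\cdot)$ is a group, and $a(b+c)=ab-a+ac$ for all $a,b,c\in A$. In a left brace, $a*b=-a+ab-b$. For subsets $L,M\subseteq A$, $L*M$ is the subgroup of $(A,+)$ generated by $\{l*m\mid l\in L,m\in M\}$. Set $A^{(1)}=A$, $A^{(r+1)}=A^{(r)}*A$, and $A^1=A$, $A^{r+1}=A*A^r$ for $r\ge1$. A subbrace is a subset that is a subgroup of both $(A,+)$ and $(A,\cdot)$; the subbrace generated by an element is the intersection of all subbraces containing it. A left brace homomorphism is a map that is a homomorphism for both operations. Generalised binomial coefficients: for $n\in\mathbb{Z}$ and integer $k\ge0$, $\binom{n}{0}=1$ and $\binom{n}{k}=\frac{n(n-1)\cdots(n-k+1)}{k!}$ for $k>0$.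 *)

From HB Require Import structures.
From mathcomp Require Import all_boot all_order all_algebra.
Set Implicit Arguments. Unset Strict Implicit. Unset Printing Implicit Defensive.
Import Order.TTheory GRing.Theory Num.Theory.
Local Open Scope ring_scope.

Section Brace.
Variables (A : zmodType) (mul : A -> A -> A).

Definition mul_identity (e : A) : Prop := forall x, mul e x = x /\ mul x e = x.

Definition is_left_brace : Prop :=
  (forall x y z, mul x (mul y z) = mul (mul x y) z) /\
  (exists e, mul_identity e /\ forall x, exists y, mul x y = e /\ mul y x = e) /\
  (forall a b c, mul a (b + c) = mul a b - a + mul a c).

Definition bstar (a b : A) : A := - a + mul a b - b.

Definition add_subgroup (S : A -> Prop) : Prop :=
  S 0 /\ forall x y, S x -> S y -> S (x - y).

Definition star_set (L M : A -> Prop) : A -> Prop :=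
  fun x => forall S, add_subgroup S ->
    (forall l m, L l -> M m -> S (bstar l m)) -> S x.

Definition whole : A -> Prop := fun _ => True.

Fixpoint derived_aux (k : nat) : A -> Prop :=
  if k is k'.+1 then star_set (derived_aux k') whole else whole.
Fixpoint power_aux (k : nat) : A -> Prop :=
  if k is k'.+1 then star_set whole (power_aux k') else whole.

(* A^(r) and A^r for r >= 1:  A^(1) = A^1 = A *)
Definition derived (r : nat) := derived_aux r.-1.
Definition bpower (r : nat) := power_aux r.-1.

Definition is_zero_set (S : A -> Prop) : Prop := forall x, S x <-> x = 0.

Definition mul_subgroup (S : A -> Prop) : Prop :=
  (exists e, mul_identity e /\ S e) /\
  (forall x y, S x -> S y -> S (mul x y)) /\
  (forall x, S x -> exists y, S y /\ mul_identity (mul x y) /\ mul_identity (mul y x)).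

Definition subbrace (S : A -> Prop) : Prop := add_subgroup S /\ mul_subgroup S.

Definition subbrace_gen (a : A) : A -> Prop :=
  fun x => forall S, subbrace S -> S a -> S x.

End Brace.

Definition brace_hom (A1 A2 : zmodType) (mul1 : A1 -> A1 -> A1)
  (mul2 : A2 -> A2 -> A2) (f : A1 -> A2) : Prop :=
  (forall x y, f (x + y) = f x + f y) /\
  (forall x y, f (mul1 x y) = mul2 (f x) (f y)).

Definition binZ (n : int) (k : nat) : int :=
  ((\prod_(i < k) (n - i%:Z)) %/ (k`!)%:Z)%Z.

Definition Bm (m : nat) := {ffun 'I_m -> int}.

(* 0-indexed coordinate (0 outside range): coord v i = n_{i+1} *)
Definition coord (m : nat) (v : Bm m) (i : nat) : int :=
  if insub i is Some j then v j else 0.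

(* w_{i+1} = n_{i+1} + sum_{k=0}^{i} C(n_1,k) t_{i+1-k}  (0-indexed here) *)
Definition mulB (m : nat) (n t : Bm m) : Bm m :=
  [ffun i : 'I_m => n i + \sum_(k < (val i).+1)
       binZ (coord n 0) k * coord t (val i - k)].

Definition bvec (m : nat) : Bm m := [ffun i : 'I_m => if val i == 0%N then 1 else 0].

From HB Require Import structures.
From mathcomp Require Import all_boot all_order all_algebra ring.
Set Implicit Arguments. Unset Strict Implicit. Unset Printing Implicit Defensive.
Import Order.TTheory GRing.Theory Num.Theory.
Local Open Scope ring_scope.

(* Write the product of B_m = Z^m as  n t = n + (1 + S)^(n_1) t,  where S is
   the shift (t_1, ..., t_m) |-> (0, t_1, ..., t_(m-1)) and (1 + S)^z is the
   finite binomial series sum_k C(z, k) S^k (S is nilpotent, so this makes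
   sense for negative z, with generalised binomial coefficients).  The brace
   axioms then reduce to the exponent law (1 + S)^(y+z) = (1 + S)^y (1 + S)^z,
   and b * w = S w, so e_i = S^i b spans B_m and lies in B_m^(i+1).

   For a left brace A with A^(3) = A^(m+1) = 0 and a in A, put D = a * -.
   Then D^m = 0, the lambda map of a is 1 + D, A^2 = A * A acts trivially
   (A^(3) = 0), and hence lambda_(za + y) = (1 + D)^z for y in A^2.  The map
   f(x) = sum_i x_(i+1) D^i a therefore satisfies f(n t) = f(n) + lambda_(f n)
   (f t) = f(n) f(t).  It is the only homomorphism with f(b) = a because a
   homomorphism commutes with *, and its image is the subbrace generated by a.
   Applying this to A = B_m, a = b shows that b generates B_m. *)

Lemma int_ind_shift (P : int -> Prop) :
  P 0 -> (forall z, P z <-> P (z + 1)) -> forall z, P z.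
Proof.
move=> P0 PS; elim/int_rect => [//|n Pn|n Pn].
  by rewrite -addn1 PoszD; apply: (PS n).1.
by apply: (PS _).2; rewrite -addn1 PoszD opprD addrNK.
Qed.

Definition ffactZ (n : int) (k : nat) : int := \prod_(i < k) (n - i%:Z).

Lemma ffactZS n k : ffactZ n k.+1 = ffactZ n k * (n - k%:Z).
Proof. by rewrite /ffactZ big_ord_recr. Qed.

Lemma ffactZ_succ n k : ffactZ (n + 1) k.+1 = (n + 1) * ffactZ n k.
Proof.
rewrite /ffactZ big_ord_recl /= subr0; congr (_ * _); apply: eq_bigr => i _.
by rewrite /bump /= add1n -addn1 PoszD opprD addrACA subrr addr0.
Qed.

Lemma ffact0Z k : ffactZ 0 k.+1 = 0.
Proof. by rewrite /ffactZ big_ord_recl /= subr0 mul0r. Qed.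

Lemma ffactZ_pascal n k :
  ffactZ (n + 1) k.+1 = ffactZ n k.+1 + k.+1%:Z * ffactZ n k.
Proof. by rewrite ffactZ_succ ffactZS -[k.+1]addn1 PoszD; ring. Qed.

(* k! divides every falling factorial of length k, so binZ is an exact
   quotient; by Pascal's rule it suffices to check n = 0. *)
Lemma dvdz_fact_ffactZ n k : ((k`!)%:Z %| ffactZ n k)%Z.
Proof.
elim: k n => [|k IHk] n; first by rewrite /ffactZ big_ord0.
have dvd_step z : ((k.+1)`!%:Z %| k.+1%:Z * ffactZ z k)%Z.
  by rewrite factS PoszM dvdz_mul.
elim/int_ind_shift: n => [|n]; first by rewrite ffact0Z dvdz0.
by rewrite ffactZ_pascal rpredDr.
Qed.

Lemma binZ_ffactZ n k : binZ n k * (k`!)%:Z = ffactZ n k.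
Proof. by rewrite /binZ divzK // dvdz_fact_ffactZ. Qed.

Lemma binZ0 n : binZ n 0 = 1.
Proof. by rewrite /binZ big_ord0 divz1. Qed.

Lemma binZ0S k : binZ 0 k.+1 = 0.
Proof. by rewrite /binZ -/(ffactZ 0 k.+1) ffact0Z div0z. Qed.

Lemma binZS n k : binZ (n + 1) k.+1 = binZ n k.+1 + binZ n k.
Proof.
apply: (@mulIf _ ((k.+1)`!)%:Z); first by rewrite eqz_nat -lt0n fact_gt0.
rewrite mulrDl !binZ_ffactZ ffactZ_pascal factS PoszM mulrCA binZ_ffactZ.
by rewrite mulrC.
Qed.

Lemma iter_is_additive (G : zmodType) (D : {additive G -> G}) k :
  zmod_morphism (iter k D).
Proof. by elim: k => // k IHk x y /=; rewrite IHk raddfB. Qed.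
HB.instance Definition _ (G : zmodType) (D : {additive G -> G}) k :=
  GRing.isZmodMorphism.Build G G (iter k D) (iter_is_additive D k).

(* For D with D^(r+1) = 0 and n : int, binpow D r n is the binomial expansion
   of (1 + D)^n = sum_(k <= r) C(n, k) D^k, which makes sense for negative n. *)
Definition binpow (G : zmodType) (D : {additive G -> G}) (r : nat) (n : int)
    (x : G) : G :=
  \sum_(k < r.+1) iter k D x *~ binZ n k.

(* The tail (binpow D r n - 1) / D = sum_(k < r) C(n, k+1) D^k. *)
Definition binpow_tail (G : zmodType) (D : {additive G -> G}) (r : nat)
    (n : int) (x : G) : G :=
  \sum_(k < r) iter k D x *~ binZ n k.+1.

Lemma binpow_is_additive (G : zmodType) (D : {additive G -> G}) r n :
  zmod_morphism (binpow D r n).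
Proof.
by move=> x y; rewrite -sumrB; apply: eq_bigr => k _; rewrite raddfB mulrzBl.
Qed.
HB.instance Definition _ (G : zmodType) (D : {additive G -> G}) r n :=
  GRing.isZmodMorphism.Build G G (binpow D r n) (binpow_is_additive D r n).

Section BinomialPower.
Variables (G : zmodType) (D : {additive G -> G}) (r : nat).
Hypothesis D_nilpotent : forall x, iter r.+1 D x = 0.
Local Notation P := (binpow D r).

Lemma binpow0 x : P 0 x = x.
Proof.
rewrite /binpow big_ord_recl binZ0 mulr1z big1 ?addr0 // => i _.
by rewrite binZ0S mulr0z.
Qed.

Lemma binpow_comm (h : {additive G -> G}) n x :
  (forall y, h (D y) = D (h y)) -> h (P n x) = P n (h x).
Proof.
move=> hD; rewrite raddf_sum; apply: eq_bigr => k _; rewrite raddfMz.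
by congr (_ *~ _); elim: (nat_of_ord k) => //= j <-.
Qed.

Lemma binpow_Dcomm n x : D (P n x) = P n (D x).
Proof. exact: binpow_comm. Qed.

(* (1 + D)^(n+1) = (1 + D)^n (1 + D), by Pascal's rule and D^(r+1) = 0. *)
Lemma binpowS n x : P (n + 1) x = P n (x + D x).
Proof.
rewrite raddfD /binpow big_ord_recl binZ0.
rewrite [X in _ = X + _]big_ord_recl binZ0 [X in _ = _ + X]big_ord_recr /=.
rewrite -iterSr D_nilpotent mul0rz addr0 -addrA; congr (_ + _).
rewrite -big_split /=; apply: eq_bigr => i _.
by rewrite binZS mulrzDr /bump /= add0n -iterS iterSr.
Qed.

Lemma binpow_natD n (p : nat) x : P (n + p%:Z) x = P n (P p x).
Proof.
elim: p x => [|p IHp] x; first by rewrite addr0 binpow0.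
by rewrite -addn1 PoszD addrA !binpowS IHp.
Qed.

Lemma binpowC n p x : P n (P p x) = P p (P n x).
Proof. by apply: binpow_comm => y; rewrite binpow_Dcomm. Qed.

Lemma binpowD n p x : P (n + p) x = P n (P p x).
Proof.
case: p => p; first exact: binpow_natD.
rewrite NegzE; set q := p.+1%:Z.
have -> : P n (P (- q) x) = P (n - q) (P q (P (- q) x)).
  by rewrite -binpow_natD subrK.
by rewrite [P q _]binpowC -binpow_natD addNr binpow0.
Qed.

Lemma binpow_subE n x : P n x - x = D (binpow_tail D r n x).
Proof.
rewrite /binpow big_ord_recl binZ0 mulr1z addrAC subrr add0r.
by rewrite raddf_sum; apply: eq_bigr => i _; rewrite raddfMz.
Qed.

End BinomialPower.

Section AddSubgroup.
Variables (A : zmodType) (S : A -> Prop).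
Hypothesis S_subgroup : add_subgroup S.

Lemma add_subgroup0 : S 0.
Proof. by case: S_subgroup. Qed.

Lemma add_subgroupB x y : S x -> S y -> S (x - y).
Proof. by case: S_subgroup => _; apply. Qed.

Lemma add_subgroupN x : S x -> S (- x).
Proof. by rewrite -sub0r; apply/add_subgroupB/add_subgroup0. Qed.

Lemma add_subgroupD x y : S x -> S y -> S (x + y).
Proof. by move=> Sx Sy; rewrite -[y]opprK; apply/add_subgroupB/add_subgroupN. Qed.

Lemma add_subgroupMz x z : S x -> S (x *~ z).
Proof.
move=> Sx; have Sxn n : S (x *+ n).
  elim: n => [|n IHn]; first by rewrite mulr0n; apply: add_subgroup0.
  by rewrite mulrS; apply: add_subgroupD.
by case: z => n; rewrite ?NegzE ?mulrNz; [apply: Sxn | apply/add_subgroupN/Sxn].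
Qed.

Lemma add_subgroup_sum (I : Type) (s : seq I) (F : I -> A) :
  (forall i, S (F i)) -> S (\sum_(i <- s) F i).
Proof.
move=> SF; elim/big_rec: _ => [|i x _ Sx]; first exact: add_subgroup0.
exact: add_subgroupD.
Qed.

End AddSubgroup.

Section StarSet.
Variables (A : zmodType) (mul : A -> A -> A).

Lemma star_set_subgroup L M : add_subgroup (star_set mul L M).
Proof.
split; first by move=> S [S0 _].
by move=> x y Lx My S S_sub Sgen; apply: (add_subgroupB S_sub); [apply: Lx | apply: My].
Qed.

Lemma star_set_gen (L M : A -> Prop) l w :
  L l -> M w -> star_set mul L M (bstar mul l w).
Proof. by move=> Ll Mw S _; apply. Qed.

Lemma subbrace_bstar (S : A -> Prop) l w :
  subbrace mul S -> S l -> S w -> S (bstar mul l w).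
Proof.
move=> [S_add [_ [S_mul _]]] Sl Sw; rewrite /bstar.
apply: (add_subgroupB S_add) => //; apply: (add_subgroupD S_add).
  exact: (add_subgroupN S_add).
exact: S_mul.
Qed.

Lemma subbrace_iter_bstar (S : A -> Prop) a k :
  subbrace mul S -> S a -> S (iter k (bstar mul a) a).
Proof. by move=> S_sub Sa; elim: k => //= k IHk; apply: subbrace_bstar. Qed.

End StarSet.

Section BraceBm.
Variable m' : nat.
Local Notation m := m'.+1.
Local Notation B := (Bm m).

Lemma coordE (v : B) (i : 'I_m) : coord v i = v i.
Proof. by rewrite /coord valK. Qed.

Lemma coord_out (v : B) j : (m <= j)%N -> coord v j = 0.
Proof. by move=> mj; rewrite /coord insubF // ltnNge mj. Qed.

Lemma coord_is_additive j : zmod_morphism (fun x : B => coord x j).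
Proof.
move=> x y; case: (ltnP j m) => jm; last by rewrite !coord_out // subr0.
by rewrite -[j]/(val (Ordinal jm)) !coordE !ffunE.
Qed.

Definition phi (x : B) : int := coord x 0.
HB.instance Definition _ :=
  GRing.isZmodMorphism.Build B int phi (coord_is_additive 0).

Definition shift (t : B) : B :=
  [ffun i : 'I_m => (if val i is j.+1 then coord t j else 0 : int)].

Lemma shift_is_additive : zmod_morphism shift.
Proof.
move=> x y; apply/ffunP => i; rewrite !ffunE.
by case: (val i) => [|j]; rewrite ?subr0 ?(coord_is_additive j).
Qed.
HB.instance Definition _ :=
  GRing.isZmodMorphism.Build B B shift shift_is_additive.

Lemma iter_shiftE k t (i : 'I_m) :
  iter k shift t i = if (k <= i)%N then coord t (i - k) else 0.
Proof.
elim: k i => [|k IHk] i; first by rewrite subn0 coordE.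
rewrite /= ffunE; case: i => [[|j] ltjm] //=.
by rewrite -[j]/(val (Ordinal (ltnW ltjm))) coordE IHk /= ltnS subSS.
Qed.

Lemma shift_nilpotent t : iter m shift t = 0.
Proof. by apply/ffunP => i; rewrite iter_shiftE ffunE leqNgt ltn_ord. Qed.

Lemma phi_shift t : phi (shift t) = 0.
Proof. by rewrite /phi -[0%N]/(val (ord0 : 'I_m)) coordE ffunE. Qed.

Local Notation P := (binpow shift m').

Lemma phi_binpow c t : phi (P c t) = phi t.
Proof. by apply/eqP; rewrite -subr_eq0 -raddfB binpow_subE; apply/eqP/phi_shift. Qed.

(* The defining formula w_i = n_i + sum_k C(n_1, k) t_(i-k) says exactly that
   n t = n + (1 + shift)^(n_1) t. *)
Lemma mulBE n t : mulB n t = n + P (phi n) t.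
Proof.
apply/ffunP => i; rewrite !ffunE sum_ffunE; congr (_ + _).
rewrite (big_ord_widen m (fun k => binZ (coord n 0) k * coord t (i - k))) //.
rewrite big_mkcond /=; apply: eq_bigr => k _.
rewrite ffunMzE iter_shiftE ltnS mulrzz mulrC.
  by case: ifP => _ //; rewrite mul0r.
exact: ltn_ord.
Qed.

Definition invB (x : B) : B := - P (- phi x) x.

Lemma mulBV x : mulB x (invB x) = 0.
Proof.
rewrite mulBE /invB raddfN /= -binpowD ?subrr ?binpow0 ?subrr //.
exact: shift_nilpotent.
Qed.

Lemma mulVB x : mulB (invB x) x = 0.
Proof. by rewrite mulBE /invB raddfN /= phi_binpow addNr. Qed.

Lemma mul0B (x : B) : mulB 0 x = x.
Proof. by rewrite mulBE raddf0 binpow0 add0r. Qed.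

Lemma mulB0 (x : B) : mulB x 0 = x.
Proof. by rewrite mulBE raddf0 addr0. Qed.

Lemma mulBA (x y z : B) : mulB x (mulB y z) = mulB (mulB x y) z.
Proof.
rewrite !mulBE !raddfD /= phi_binpow binpowD ?addrA //.
exact: shift_nilpotent.
Qed.

Lemma Bm_left_brace : is_left_brace (@mulB m).
Proof.
split; first exact: mulBA.
split; last by move=> a b c; rewrite !mulBE raddfD [a + _ - a]addrAC subrr add0r addrCA.
exists 0; split; first by move=> x; rewrite mul0B mulB0.
by move=> x; exists (invB x); rewrite mulBV mulVB.
Qed.

End BraceBm.

Section NilpotencyBm.
Variable m' : nat.
Local Notation m := m'.+1.
Local Notation B := (Bm m).
Local Notation shift := (@shift m').

Lemma bstarBE (l w : B) : bstar (@mulB m) l w = shift (binpow_tail shift m' (phi l) w).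
Proof. by rewrite /bstar mulBE addrA addNr add0r binpow_subE. Qed.

Lemma phi_bvec : phi (bvec m) = 1.
Proof. by rewrite /phi -[0%N]/(val (ord0 : 'I_m)) coordE ffunE. Qed.

Lemma bstar_bvec w : bstar (@mulB m) (bvec m) w = shift w.
Proof.
rewrite /bstar mulBE addrA addNr add0r phi_bvec -[1]add0r binpowS.
  by rewrite binpow0 addrC addKr.
exact: shift_nilpotent.
Qed.

(* B^(3) = (B * B) * B = 0: elements of B * B have first coordinate 0, and
   l * w = 0 whenever l_1 = 0. *)
Lemma derived3_Bm : is_zero_set (derived (@mulB m) 3).
Proof.
move=> x; split; last by move=> ->; apply: add_subgroup0; apply: star_set_subgroup.
move=> Dx; apply: (Dx (fun x => x = 0)).
  by split => // x0 y0 -> ->; rewrite subrr.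
move=> l w Dl _.
have phi_l : phi l = 0.
  apply: (Dl (fun x => phi x = 0)); last by move=> ? ? _ _; rewrite bstarBE phi_shift.
  by split=> [|x0 y0 h1 h2]; rewrite ?raddf0 // raddfB /= h1 h2 subrr.
by rewrite /bstar mulBE phi_l binpow0 addrA addNr add0r subrr.
Qed.

Definition low_zero k (x : B) := forall j : 'I_m, (j < k)%N -> x j = 0.

Lemma low_zero_subgroup k : add_subgroup (low_zero k).
Proof.
split; first by move=> j _; rewrite ffunE.
by move=> x y hx hy j hj; rewrite !ffunE hx // hy // subrr.
Qed.

Lemma low_zero_shift k x : low_zero k x -> low_zero k.+1 (shift x).
Proof.
move=> hx [[|j] ltjm] /= ltjk; rewrite ffunE //=.
by rewrite -[j]/(val (Ordinal (ltnW ltjm))) coordE hx.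
Qed.

Lemma low_zero_iter k i x : low_zero k x -> low_zero k (iter i shift x).
Proof.
move=> hx; elim: i => //= i IHi j ltjk.
by apply: low_zero_shift IHi j (ltnW ltjk).
Qed.

Lemma power_low_zero k x : power_aux (@mulB m) k x -> low_zero k x.
Proof.
elim: k x => [|k IHk] x; first by move=> _ j.
move=> Px; apply: (Px (low_zero k.+1)); first exact: low_zero_subgroup.
move=> l w _ Pw; rewrite bstarBE; apply: low_zero_shift.
apply: (add_subgroup_sum (low_zero_subgroup k)) => i.
exact/(add_subgroupMz (low_zero_subgroup k))/low_zero_iter/IHk.
Qed.

Lemma power_Bm : is_zero_set (bpower (@mulB m) m.+1).
Proof.
move=> x; split; last by move=> ->; apply: add_subgroup0; apply: star_set_subgroup.
by move/power_low_zero=> hx; apply/ffunP => j; rewrite ffunE hx.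
Qed.

(* The standard basis: e_i = shift^i b = b * (b * ... (b * b)), which lies
   in B^(i+1). *)
Definition ei i : B := iter i shift (bvec m).

Lemma eiE i (j : 'I_m) : ei i j = (i == j :> nat)%:R.
Proof.
rewrite /ei iter_shiftE.
have ltjim : (j - i < m)%N by apply: leq_ltn_trans (leq_subr i j) (ltn_ord j).
rewrite -[(j - i)%N]/(val (Ordinal ltjim)) coordE ffunE /=.
by case: (ltngtP i j) => [ltij|ltji|->]; rewrite ?subnn // subn_eq0 leqNgt ltij.
Qed.

Lemma power_ei k : power_aux (@mulB m) k (ei k).
Proof. by elim: k => // k IHk; rewrite /ei iterS -bstar_bvec; apply: star_set_gen. Qed.

Lemma power_Bm_neq0 : ~ is_zero_set (bpower (@mulB m) m).
Proof.
move=> h; have /h/ffunP/(_ ord_max) := power_ei m'.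
by rewrite eiE eqxx ffunE.
Qed.

Lemma Bm_decomp (x : B) : x = \sum_(i < m) ei i *~ x i.
Proof.
apply/ffunP => j; rewrite sum_ffunE (bigD1 j) //= big1 ?addr0.
  by rewrite ffunMzE eiE eqxx mulrzz mul1r.
by move=> i neq_ij; rewrite ffunMzE eiE (inj_eq val_inj) (negbTE neq_ij) mul0rz.
Qed.

End NilpotencyBm.

Lemma morph_add_zmod (U V : zmodType) (f : U -> V) :
  {morph f : x y / x + y} -> zmod_morphism f.
Proof. by move=> fD x y; apply: (addIr (f y)); rewrite -fD !subrK. Qed.

Section LambdaMaps.
Variables (A : zmodType) (mulA : A -> A -> A).
Hypothesis A_brace : is_left_brace mulA.

(* lambda_x y = - x + x y; the brace axiom says lambda_x is additive. *)
Definition lam x y := - x + mulA x y.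

Lemma mulA_lam x y : mulA x y = x + lam x y.
Proof. by rewrite /lam addNKr. Qed.

Lemma bstar_lam x y : bstar mulA x y = lam x y - y.
Proof. by []. Qed.

Lemma lamD x y z : lam x (y + z) = lam x y + lam x z.
Proof.
by case: A_brace => _ [_ distr]; rewrite /lam distr -!addrA.
Qed.

Lemma lam_is_additive x : zmod_morphism (lam x).
Proof. exact/morph_add_zmod/lamD. Qed.

Lemma mulA0 x : mulA x 0 = x.
Proof.
have := lamD x 0 0; rewrite addr0 -{1}[lam x 0]addr0 => /addrI lam_x0.
by rewrite mulA_lam -lam_x0 addr0.
Qed.

Lemma mul0A x : mulA 0 x = x.
Proof.
case: A_brace => _ [[e [e_id _]] _]; have [e0 _] := e_id 0.
by rewrite mulA0 in e0; rewrite -e0; case: (e_id x).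
Qed.

Lemma mulA_inverse x : exists y, mulA x y = 0 /\ mulA y x = 0.
Proof.
case: A_brace => _ [[e [e_id inv]] _]; have [e0 _] := e_id 0.
by rewrite mulA0 in e0; rewrite -e0; apply: inv.
Qed.

Lemma lam0 y : lam 0 y = y.
Proof. by rewrite /lam mul0A oppr0 add0r. Qed.

Lemma lam_mul x y w : lam (mulA x y) w = lam x (lam y w).
Proof.
case: A_brace => mulAA _.
have mul3 : mulA x (mulA y w) = mulA x y + lam x (lam y w).
  by rewrite [mulA y w]mulA_lam mulA_lam lamD addrA -mulA_lam.
by rewrite {1}/lam -mulAA mul3 addKr.
Qed.

Local Notation A2 := (star_set mulA (@whole A) (@whole A)).

Lemma A2_subgroup : add_subgroup A2.
Proof. exact: star_set_subgroup. Qed.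

Lemma A2_bstar x y : A2 (bstar mulA x y).
Proof. exact: star_set_gen. Qed.

(* A^2 is invariant under every lambda_z, since
   lambda_z (b * c) = (zb) * c - z * c. *)
Lemma lam_A2 z y : A2 y -> A2 (lam z y).
Proof.
have lamB := lam_is_additive z.
move=> A2y; apply: (A2y (fun y => A2 (lam z y))).
  split; first by rewrite -[0]subr0 lamB subrr; apply: add_subgroup0 A2_subgroup.
  by move=> x0 y0 h1 h2; rewrite lamB; apply: add_subgroupB A2_subgroup _ _ h1 h2.
move=> b c _ _; rewrite bstar_lam lamB.
have -> : lam z (lam b c) - lam z c = bstar mulA (mulA z b) c - bstar mulA z c.
  by rewrite !bstar_lam lam_mul opprB addrA subrK.
by apply: (add_subgroupB A2_subgroup); apply: A2_bstar.
Qed.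

Hypothesis A_derived3 : is_zero_set (derived mulA 3).

Lemma lam_A2_id l w : A2 l -> lam l w = w.
Proof.
move=> A2l; have : derived mulA 3 (bstar mulA l w) by apply: star_set_gen.
by move/A_derived3; rewrite bstar_lam => /eqP; rewrite subr_eq0 => /eqP.
Qed.

(* Hence lambda_(x + y) = lambda_x for y in A^2, as x + y = x lambda_x^-1 (y). *)
Lemma lam_addA2 x y w : A2 y -> lam (x + y) w = lam x w.
Proof.
move=> A2y; have [x' [xx' _]] := mulA_inverse x.
have -> : x + y = mulA x (lam x' y) by rewrite mulA_lam -lam_mul xx' lam0.
by rewrite lam_mul (lam_A2_id (l := lam x' y)) //; apply: lam_A2.
Qed.

End LambdaMaps.

Section Universal.
Variables (A : zmodType) (mulA : A -> A -> A) (m' : nat).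
Local Notation m := m'.+1.
Local Notation B := (Bm m).
Local Notation shift := (@shift m').
Local Notation A2 := (star_set mulA (@whole A) (@whole A)).
Hypotheses (A_brace : is_left_brace mulA)
  (A_derived3 : is_zero_set (derived mulA 3))
  (A_power : is_zero_set (bpower mulA m.+1)).
Variable a : A.

Definition Da (y : A) : A := bstar mulA a y.

Lemma Da_is_additive : zmod_morphism Da.
Proof.
apply: morph_add_zmod => x y.
by rewrite /Da !bstar_lam (lamD A_brace) opprD addrACA.
Qed.
HB.instance Definition _ := GRing.isZmodMorphism.Build A A Da Da_is_additive.

Lemma power_iter_Da k y : power_aux mulA k (iter k Da y).
Proof. by elim: k => // k IHk; rewrite iterS; apply: star_set_gen. Qed.

Lemma Da_nilpotent y : iter m Da y = 0.
Proof. exact/A_power/power_iter_Da. Qed.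

Local Notation P := (binpow Da m').

Lemma lam_a w : lam mulA a w = w + Da w.
Proof. by rewrite /Da bstar_lam addrC subrK. Qed.

Lemma lam_add_a x w : lam mulA (x + a) w = lam mulA x (w + Da w).
Proof.
have xa : mulA x a = (x + a) + bstar mulA x a.
  by rewrite (mulA_lam mulA x a) bstar_lam -addrA (addrCA a) subrr addr0.
rewrite -lam_a -(lam_mul A_brace) xa.
by rewrite (lam_addA2 A_brace A_derived3 (x + a)) //; apply: A2_bstar.
Qed.

Lemma lam_mulz z w : lam mulA (a *~ z) w = P z w.
Proof.
elim/int_ind_shift: z w => [w|z]; first by rewrite mulr0z lam0 // binpow0.
rewrite mulrzDr mulr1z; split=> IH w.
  by rewrite lam_add_a IH binpowS //; exact: Da_nilpotent.
pose v := P (-1) w.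
have v_pre : v + Da v = w.
  rewrite /v binpow_Dcomm -raddfD /= -binpowS ?addNr ?binpow0 //.
  exact: Da_nilpotent.
by rewrite -v_pre -lam_add_a IH binpowS //; exact: Da_nilpotent.
Qed.

Definition univ_map (x : B) : A := \sum_(i < m) iter i Da a *~ x i.

Lemma univ_map_is_additive : zmod_morphism univ_map.
Proof.
by move=> x y; rewrite -sumrB; apply: eq_bigr => i _; rewrite !ffunE mulrzBr.
Qed.
HB.instance Definition _ :=
  GRing.isZmodMorphism.Build B A univ_map univ_map_is_additive.

(* f intertwines the shift of B_m with D; the top term vanishes as D^m = 0. *)
Lemma univ_map_shift t : univ_map (shift t) = Da (univ_map t).
Proof.
rewrite /univ_map raddf_sum [in RHS]big_ord_recr /=.
rewrite [Da (_ *~ _)]raddfMz -iterS Da_nilpotent mul0rz addr0.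
rewrite big_ord_recl ffunE mulr0z add0r; apply: eq_bigr => i _.
by rewrite raddfMz ffunE /= -[nat_of_ord i]/(val (widen_ord (leqnSn m') i)) coordE.
Qed.

Lemma univ_map_binpow c t :
  univ_map (binpow shift m' c t) = P c (univ_map t).
Proof.
rewrite /binpow raddf_sum; apply: eq_bigr => k _; rewrite raddfMz; congr (_ *~ _).
by elim: (nat_of_ord k) => //= k' <-; rewrite univ_map_shift.
Qed.

(* f(n) = n_1 a + (an element of A^2), so lambda_(f n) = (1 + D)^(n_1). *)
Lemma lam_univ_map n w : lam mulA (univ_map n) w = P (phi n) w.
Proof.
have -> : univ_map n = a *~ phi n + \sum_(i < m') iter i.+1 Da a *~ n (lift ord0 i).
  by rewrite /univ_map big_ord_recl /phi -[0%N]/(val (ord0 : 'I_m)) coordE.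
rewrite (lam_addA2 A_brace A_derived3) ?lam_mulz //.
apply: (add_subgroup_sum (A2_subgroup mulA)) => i.
by apply: (add_subgroupMz (A2_subgroup mulA)); apply: A2_bstar.
Qed.

Lemma univ_map_mul n t : univ_map (mulB n t) = mulA (univ_map n) (univ_map t).
Proof. by rewrite mulBE raddfD /= univ_map_binpow (mulA_lam mulA) lam_univ_map. Qed.

Lemma univ_map_bvec : univ_map (bvec m) = a.
Proof.
rewrite /univ_map big_ord_recl big1 ?addr0 /=; first by rewrite ffunE mulr1z.
by move=> i _; rewrite ffunE mulr0z.
Qed.

Lemma univ_map_ei i : univ_map (ei m' i) = iter i Da a.
Proof.
elim: i => [|i IHi]; first exact: univ_map_bvec.
by rewrite /ei !iterS univ_map_shift -/(ei m' i) IHi.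
Qed.

Lemma univ_map_hom : brace_hom (@mulB m) mulA univ_map.
Proof. by split=> [x y|]; [rewrite raddfD | exact: univ_map_mul]. Qed.

(* A brace homomorphism sending b to a sends e_i = b * (b * ... b) to
   a * (a * ... a) = D^i a, hence agrees with f on the basis. *)
Lemma univ_map_unique (g : B -> A) :
  brace_hom (@mulB m) mulA g -> g (bvec m) = a -> forall x, g x = univ_map x.
Proof.
move=> [gD gM] gb.
pose gA : {additive B -> A} :=
  HB.pack g (GRing.isZmodMorphism.Build B A g (morph_add_zmod gD)).
have g_bstar l w : g (bstar (@mulB m) l w) = bstar mulA (g l) (g w).
  by rewrite /bstar -[g _]/(gA _) raddfB raddfD raddfN /= gM.
have g_ei i : g (ei m' i) = iter i Da a.
  by elim: i => // i IHi; rewrite /ei iterS -bstar_bvec g_bstar gb -/(ei m' i) IHi.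
move=> x; rewrite (Bm_decomp x) -[g _]/(gA _) !raddf_sum.
by apply: eq_bigr => i _; rewrite !raddfMz /= g_ei univ_map_ei.
Qed.

Lemma univ_map_image_subbrace : subbrace mulA (fun y => exists x, univ_map x = y).
Proof.
have zero_id : mul_identity mulA 0.
  by move=> z; rewrite (mul0A A_brace) (mulA0 A_brace).
split.
  split; first by exists 0; rewrite raddf0.
  by move=> _ _ [x <-] [x' <-]; exists (x - x'); rewrite raddfB.
split; first by exists 0; split; last by exists 0; rewrite raddf0.
split; first by move=> _ _ [x <-] [x' <-]; exists (mulB x x'); exact: univ_map_mul.
move=> _ [x <-]; exists (univ_map (invB x)); split; first by exists (invB x).
by rewrite -!univ_map_mul mulBV mulVB raddf0.
Qed.

Lemma univ_map_image y : (exists x, univ_map x = y) <-> subbrace_gen mulA a y.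
Proof.
split=> [[x <-] S S_sub Sa | gen_y].
  apply: (add_subgroup_sum S_sub.1) => i; apply: (add_subgroupMz S_sub.1).
  exact: (@subbrace_iter_bstar A mulA S a i S_sub Sa).
apply: (gen_y (fun y => exists x, univ_map x = y)); first exact: univ_map_image_subbrace.
by exists (bvec m); exact: univ_map_bvec.
Qed.

End Universal.

(* B_m is generated by b: the universal map B_m -> B_m sending b to b is the
   identity by uniqueness, and its image is the subbrace generated by b. *)
Lemma Bm_generated m' (x : Bm m'.+1) : subbrace_gen (@mulB m'.+1) (bvec m'.+1) x.
Proof.
apply: (univ_map_image (Bm_left_brace m') (@derived3_Bm m') (@power_Bm m')
  (bvec m'.+1) x).1.
exists x; symmetry.
by apply: (univ_map_unique (Bm_left_brace m') (@power_Bm m') (g := id)).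
Qed.

Theorem theoremE (m : nat) (hm : (2 <= m)%N) :
  is_left_brace (@mulB m) /\
  is_zero_set (derived (@mulB m) 3) /\
  is_zero_set (bpower (@mulB m) m.+1) /\
  ~ is_zero_set (bpower (@mulB m) m) /\
  (forall x : Bm m, subbrace_gen (@mulB m) (bvec m) x) /\
  (forall (A : zmodType) (mulA : A -> A -> A),
     is_left_brace mulA ->
     is_zero_set (derived mulA 3) -> is_zero_set (bpower mulA m.+1) ->
     forall a : A,
       exists f : Bm m -> A,
         (brace_hom (@mulB m) mulA f /\ f (bvec m) = a) /\
         (forall g : Bm m -> A, brace_hom (@mulB m) mulA g -> g (bvec m) = a ->
            forall x, g x = f x) /\
         (forall y, (exists x, f x = y) <-> subbrace_gen mulA a y)).
Proof.
case: m hm => [//|m'] _.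
split; first exact: Bm_left_brace.
split; first exact: derived3_Bm.
split; first exact: power_Bm.
split; first exact: power_Bm_neq0.
split; first exact: Bm_generated.
move=> A mulA A_brace A_derived3 A_power a.
exists (univ_map mulA a); split; first split.
- exact: univ_map_hom.
- exact: univ_map_bvec.
split; [exact: univ_map_unique | exact: univ_map_image].
Qed.
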